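(* Let $\phi\in(\pi,2\pi)$ and $l>0$. For $r=l+\epsilon$ with $\epsilon>0$ sufficiently small, $$\sum_{k=3,4}\mathbf 1(C_k(\phi,l,r))\,g_k(\phi,l,r)=\mathbf 1(C_{34}(\phi,l,r))\,g_4(\phi,l,r).$$
   Context: Conditions: $C_3(\phi,l,r)$: $3\pi/2<\phi<2\pi$ and $l|\sin\phi|\le r$; $C_4(\phi,l,r)$: $\pi<\phi\le3\pi/2$ and $l\le r$; $C_{34}=C_3\cup C_4$; $\mathbf1$ is the indicator. With $\arcsin\in[-\pi/2,\pi/2]$, $[t]^+=\max(t,0)$, and all quantities evaluated at $(\phi,l,r)$: $\gamma=l\sin(2\pi-\phi)/r$, $\zeta_1=\phi-\pi-\arcsin\gamma$, $\zeta_2=\phi-\pi-(\pi-\arcsin\gamma)$, $g_{3,1}=-2\gamma^2+\frac{1}{\tan\phi}(2\arcsin\gamma-2\gamma\sqrt{1-\gamma^2})$, $g_{3,2}=\frac{1}{\tan\phi}(-2(-\arcsin\gamma-\phi+2\pi)-2\gamma\sqrt{1-\gamma^2}-\sin2\phi)-1+2\gamma^2+\cos2\phi$, $g_{3,3}=\frac{l^2\sin\phi}{2}(\zeta_1\cos\phi-\sin\phi(\log|\sin\phi|-\log\gamma))$, $g_{3,4}=\frac{l^2\sin\phi}{2}(\pi-2\arcsin\gamma)\cos\phi$, $g_3=lr(\cos([\zeta_2]^+)-\cos\zeta_1)-\frac{r^2}{8}g_{3,1}+(-\frac{r^2}{8}g_{3,2}+g_{3,4})\mathbf1(\zeta_2>0)+g_{3,3}\mathbf1(\zeta_2\le0)$,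 $g_4=lr(1-\cos\zeta_1)-\frac{r^2}{8}g_{3,1}+g_{3,3}$. *)

From Stdlib Require Import Reals Lra ClassicalEpsilon.
Open Scope R_scope.

Definition indic (P : Prop) : R :=
  if excluded_middle_informative P then 1 else 0.

Definition pos_part (t : R) : R := Rmax t 0.

(* 1/tan phi, read as cot phi = cos phi / sin phi (well defined for sin phi <> 0) *)
Definition cot (phi : R) : R := cos phi / sin phi.

Definition Cond3 (phi l r : R) : Prop :=
  3 * PI / 2 < phi < 2 * PI /\ l * Rabs (sin phi) <= r.
Definition Cond4 (phi l r : R) : Prop :=
  PI < phi <= 3 * PI / 2 /\ l <= r.
Definition Cond34 (phi l r : R) : Prop := Cond3 phi l r \/ Cond4 phi l r.

Definition gam (phi l r : R) : R := l * sin (2 * PI - phi) / r.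
Definition zeta1 (phi l r : R) : R := phi - PI - asin (gam phi l r).
Definition zeta2 (phi l r : R) : R := phi - PI - (PI - asin (gam phi l r)).

Definition g31 (phi l r : R) : R :=
  let g := gam phi l r in
  - 2 * g ^ 2 + cot phi * (2 * asin g - 2 * g * sqrt (1 - g ^ 2)).

Definition g32 (phi l r : R) : R :=
  let g := gam phi l r in
  cot phi * (- 2 * (- asin g - phi + 2 * PI) - 2 * g * sqrt (1 - g ^ 2) - sin (2 * phi))
  - 1 + 2 * g ^ 2 + cos (2 * phi).

Definition g33 (phi l r : R) : R :=
  l ^ 2 * sin phi / 2 *
  (zeta1 phi l r * cos phi - sin phi * (ln (Rabs (sin phi)) - ln (gam phi l r))).

Definition g34 (phi l r : R) : R :=
  l ^ 2 * sin phi / 2 * (PI - 2 * asin (gam phi l r)) * cos phi.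

Definition g3 (phi l r : R) : R :=
  l * r * (cos (pos_part (zeta2 phi l r)) - cos (zeta1 phi l r))
  - r ^ 2 / 8 * g31 phi l r
  + (- (r ^ 2 / 8) * g32 phi l r + g34 phi l r) * indic (zeta2 phi l r > 0)
  + g33 phi l r * indic (zeta2 phi l r <= 0).

Definition g4 (phi l r : R) : R :=
  l * r * (1 - cos (zeta1 phi l r)) - r ^ 2 / 8 * g31 phi l r + g33 phi l r.

From Stdlib Require Import Reals Lra ClassicalEpsilon.
Open Scope R_scope.

(* The identity holds for every [r >= l], so any [eps0 > 0] works.  For [phi]
   in the third quadrant only [C_4] holds.  In the fourth quadrant only [C_3]
   holds, and [gam <= sin (2 pi - phi)] gives [asin gam <= 2 pi - phi], i.e.
   [zeta2 <= 0]: the [zeta2 > 0] branch of [g3] is off, [cos [zeta2]^+ = 1],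
   and [g3] is literally [g4]. *)

Lemma indic_true (P : Prop) : P -> indic P = 1.
Proof. intros HP; unfold indic; destruct (excluded_middle_informative P); tauto. Qed.

Lemma indic_false (P : Prop) : ~ P -> indic P = 0.
Proof. intros HP; unfold indic; destruct (excluded_middle_informative P); tauto. Qed.

Lemma asin_le_of_le_sin (x y : R) :
  - (PI / 2) <= x <= PI / 2 -> -1 <= y <= sin x -> asin y <= x.
Proof.
  intros Hx Hy.
  assert (Hy1 : -1 <= y <= 1) by (pose proof (SIN_bound x); lra).
  destruct (Rle_or_lt (asin y) x) as [Hle | Hlt]; [exact Hle |].
  pose proof (asin_bound y).
  assert (Hsin : sin x < sin (asin y)) by (apply sin_increasing_1; lra).
  rewrite sin_asin in Hsin by exact Hy1. lra.
Qed.

Lemma zeta2_nonpos (phi l r : R) :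
  phi <= 2 * PI -> 0 <= l <= r -> 0 < r -> zeta2 phi l r <= 0.
Proof.
  intros Hphi Hl Hr. unfold zeta2.
  set (th := 2 * PI - phi).
  assert (Hth : 0 <= th) by (unfold th; lra).
  enough (asin (gam phi l r) <= th) by (unfold th in *; lra).
  destruct (Rle_or_lt th (PI / 2)) as [Hsmall | Hlarge].
  - assert (Hsin : 0 <= sin th) by (apply sin_ge_0; lra).
    apply asin_le_of_le_sin; [lra |].
    unfold gam; fold th; unfold Rdiv.
    assert (Hinv : 0 < / r) by (apply Rinv_0_lt_compat; exact Hr).
    assert (Hrinv : r * / r = 1) by (field; lra).
    split.
    + pose proof (Rmult_le_pos _ _ (proj1 Hl) Hsin). nra.
    + pose proof (Rmult_le_compat_r _ _ _ Hsin (proj2 Hl)). nra.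
  - pose proof (asin_bound (gam phi l r)). lra.
Qed.

Lemma g3_eq_g4_of_zeta2_nonpos (phi l r : R) :
  zeta2 phi l r <= 0 -> g3 phi l r = g4 phi l r.
Proof.
  intros Hz. unfold g3, g4, pos_part.
  rewrite Rmax_right, cos_0 by exact Hz.
  rewrite indic_false, indic_true by lra.
  ring.
Qed.

Lemma Cond34_indicator_sum (phi l r : R) :
  PI < phi < 2 * PI -> 0 <= l <= r -> 0 < r ->
  indic (Cond3 phi l r) * g3 phi l r + indic (Cond4 phi l r) * g4 phi l r
  = indic (Cond34 phi l r) * g4 phi l r.
Proof.
  intros Hphi Hl Hr.
  destruct (Rle_or_lt phi (3 * PI / 2)) as [Hthird | Hfourth].
  - assert (HC4 : Cond4 phi l r) by (unfold Cond4; lra).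
    rewrite (indic_false (Cond3 phi l r)) by (unfold Cond3; lra).
    rewrite (indic_true (Cond4 phi l r)) by exact HC4.
    rewrite (indic_true (Cond34 phi l r)) by (right; exact HC4).
    ring.
  - assert (HC3 : Cond3 phi l r).
    { split; [lra |].
      pose proof (Rabs_le (sin phi) 1 (SIN_bound phi)).
      pose proof (Rmult_le_compat_l _ _ _ (proj1 Hl) H). lra. }
    rewrite (indic_true (Cond3 phi l r)) by exact HC3.
    rewrite (indic_false (Cond4 phi l r)) by (unfold Cond4; lra).
    rewrite (indic_true (Cond34 phi l r)) by (left; exact HC3).
    rewrite g3_eq_g4_of_zeta2_nonpos by (apply zeta2_nonpos; lra).
    ring.
Qed.

Theorem lemma2 (phi l : R) :
  PI < phi < 2 * PI -> 0 < l ->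
  exists eps0 : R, 0 < eps0 /\
    forall eps : R, 0 < eps < eps0 ->
      let r := l + eps in
      indic (Cond3 phi l r) * g3 phi l r + indic (Cond4 phi l r) * g4 phi l r
      = indic (Cond34 phi l r) * g4 phi l r.
Proof.
  intros Hphi Hl. exists 1. split; [lra |].
  intros eps Heps r.
  apply Cond34_indicator_sum; unfold r; lra.
Qed.
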